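(* Let $\mathbf{A}\in V(\mathsf{BCA})$. Put $O(\mathbf{A})=\{a\in A:J_2a=a\}$ and $D(\mathbf{A})=\{a\in A:J_2a=0\}$. For $a\in A$: (1) $a\in O(\mathbf{A})$ iff $a=J_2b$ for some $b\in A$; (2) $a\in D(\mathbf{A})$ iff $a=b\wedge\neg b$ for some $b\in A$. Moreover: (3) $O(\mathbf{A})$ is the universe of a subalgebra $\mathbf{O}(\mathbf{A})$ of $\mathbf{A}$ whose $\{\wedge,\vee,\neg,0,1\}$-reduct is a Boolean algebra; (4) $D(\mathbf{A})$ is the universe of a semilattice $\mathbf{D}(\mathbf{A})$ which is isomorphic to a quotient of $\mathbf{A}$. Here $D(\mathbf{A})$ contains $0$ and is closed under $\vee$ and $J_2$, and $\neg$ is set to be the identity on it.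
   Context: $\mathbf{WK}^e$ is the three-element algebra on $\{0,\tfrac12,1\}$ of type $\langle\wedge,\vee,\neg,J_2,0,1\rangle$. Its operations are: - $\neg$ swaps $0,1$ and fixes $\tfrac12$; - $\wedge,\vee$ are Boolean on $\{0,1\}$ and return $\tfrac12$ if some argument is $\tfrac12$; - $J_2(1)=1$ and $J_2(\tfrac12)=J_2(0)=0$. $\mathsf{BCA}=ISP(\mathbf{WK}^e)$ and $V(\mathsf{BCA})=HSP(\mathbf{WK}^e)$. A semilattice (in this type) is a member of $V(\mathsf{BCA})$ satisfying $\neg x\approx x$. Equivalently, its $\vee$ and $\wedge$ coincide, giving a join-semilattice with zero $0=1$, and $J_2$ is constantly $0$. *)

Record alg := Alg {
  car :> Type;
  meet : car -> car -> car;
  join : car -> car -> car;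
  neg  : car -> car;
  j2   : car -> car;
  zero : car;
  one  : car }.

Inductive wk := W0 | Wh | W1.

Definition wk_neg (x : wk) : wk :=
  match x with W0 => W1 | Wh => Wh | W1 => W0 end.
Definition wk_meet (x y : wk) : wk :=
  match x, y with
  | Wh, _ | _, Wh => Wh
  | W1, W1 => W1
  | _, _ => W0 end.
Definition wk_join (x y : wk) : wk :=
  match x, y with
  | Wh, _ | _, Wh => Wh
  | W0, W0 => W0
  | _, _ => W1 end.
Definition wk_j2 (x : wk) : wk :=
  match x with W1 => W1 | _ => W0 end.

Definition WKe : alg := Alg wk wk_meet wk_join wk_neg wk_j2 W0 W1.

Definition power (I : Type) : alg :=
  Alg (I -> wk)
      (fun x y i => wk_meet (x i) (y i))
      (fun x y i => wk_join (x i) (y i))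
      (fun x i => wk_neg (x i))
      (fun x i => wk_j2 (x i))
      (fun _ => W0) (fun _ => W1).

Definition subuniverse (A : alg) (S : A -> Prop) : Prop :=
  S (zero A) /\ S (one A) /\
  (forall x y, S x -> S y -> S (meet A x y)) /\
  (forall x y, S x -> S y -> S (join A x y)) /\
  (forall x, S x -> S (neg A x)) /\
  (forall x, S x -> S (j2 A x)).

Definition hom_on (A B : alg) (S : A -> Prop) (h : A -> B) : Prop :=
  h (zero A) = zero B /\ h (one A) = one B /\
  (forall x y, S x -> S y -> h (meet A x y) = meet B (h x) (h y)) /\
  (forall x y, S x -> S y -> h (join A x y) = join B (h x) (h y)) /\
  (forall x, S x -> h (neg A x) = neg B (h x)) /\
  (forall x, S x -> h (j2 A x) = j2 B (h x)).

Definition is_hom (A B : alg) (h : A -> B) : Prop := hom_on A B (fun _ => True) h.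

(** B is in V(BCA) = HSP(WK^e): a homomorphic image of a subalgebra of a
    direct power of WK^e. *)
Definition in_V (B : alg) : Prop :=
  exists (I : Type) (S : power I -> Prop) (h : power I -> B),
    subuniverse (power I) S /\ hom_on (power I) B S h /\
    (forall b : B, exists x, S x /\ h x = b).

Definition congruence (A : alg) (th : A -> A -> Prop) : Prop :=
  (forall x, th x x) /\ (forall x y, th x y -> th y x) /\
  (forall x y z, th x y -> th y z -> th x z) /\
  (forall x x' y y', th x x' -> th y y' -> th (meet A x y) (meet A x' y')) /\
  (forall x x' y y', th x x' -> th y y' -> th (join A x y) (join A x' y')) /\
  (forall x x', th x x' -> th (neg A x) (neg A x')) /\
  (forall x x', th x x' -> th (j2 A x) (j2 A x')).

(** B is isomorphic to the quotient A/th: there is a surjective homomorphism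
    A -> B whose kernel is exactly th (so the induced map A/th -> B is an
    isomorphism). *)
Definition iso_to_quotient (A B : alg) (th : A -> A -> Prop) : Prop :=
  exists f : A -> B, is_hom A B f /\ (forall b : B, exists a, f a = b) /\
    (forall x y, th x y <-> f x = f y).

Definition is_semilattice (B : alg) : Prop :=
  in_V B /\ forall x : B, neg B x = x.

Definition boolean_reduct (B : alg) : Prop :=
  forall x y z : B,
    meet B x y = meet B y x /\ join B x y = join B y x /\
    meet B x (meet B y z) = meet B (meet B x y) z /\
    join B x (join B y z) = join B (join B x y) z /\
    meet B x (join B x y) = x /\ join B x (meet B x y) = x /\
    meet B x (join B y z) = join B (meet B x y) (meet B x z) /\
    join B x (meet B y z) = meet B (join B x y) (join B x z) /\
    join B x (zero B) = x /\ meet B x (one B) = x /\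
    meet B x (neg B x) = zero B /\ join B x (neg B x) = one B.

Definition Oset (A : alg) (a : A) : Prop := j2 A a = a.
Definition Dset (A : alg) (a : A) : Prop := j2 A a = zero A.

Definition O_alg (A : alg) (H : subuniverse A (Oset A)) : alg :=
  match H with
  | conj h0 (conj h1 (conj hm (conj hj (conj hn hJ)))) =>
    Alg {a : A | Oset A a}
      (fun x y => exist _ (meet A (proj1_sig x) (proj1_sig y))
                    (hm _ _ (proj2_sig x) (proj2_sig y)))
      (fun x y => exist _ (join A (proj1_sig x) (proj1_sig y))
                    (hj _ _ (proj2_sig x) (proj2_sig y)))
      (fun x => exist _ (neg A (proj1_sig x)) (hn _ (proj2_sig x)))
      (fun x => exist _ (j2 A (proj1_sig x)) (hJ _ (proj2_sig x)))
      (exist _ (zero A) h0) (exist _ (one A) h1)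
  end.

Definition D_closed (A : alg) : Prop :=
  Dset A (zero A) /\
  (forall x y, Dset A x -> Dset A y -> Dset A (meet A x y)) /\
  (forall x y, Dset A x -> Dset A y -> Dset A (join A x y)) /\
  (forall x, Dset A x -> Dset A (j2 A x)).

(** The algebra D(A): meet, join, J2 inherited from A, neg := identity,
    and both constants 0 and 1 interpreted as 0 of A (in a semilattice 0 = 1). *)
Definition D_alg (A : alg) (H : D_closed A) : alg :=
  match H with
  | conj h0 (conj hm (conj hj hJ)) =>
    Alg {a : A | Dset A a}
      (fun x y => exist _ (meet A (proj1_sig x) (proj1_sig y))
                    (hm _ _ (proj2_sig x) (proj2_sig y)))
      (fun x y => exist _ (join A (proj1_sig x) (proj1_sig y))
                    (hj _ _ (proj2_sig x) (proj2_sig y)))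
      (fun x => x)
      (fun x => exist _ (j2 A (proj1_sig x)) (hJ _ (proj2_sig x)))
      (exist _ (zero A) h0) (exist _ (zero A) h0)
  end.

(* Identities are preserved by direct powers, subalgebras and homomorphic
   images, so every algebra in V(BCA) = HSP(WK^e) satisfies each identity that
   holds in WK^e, and those are checked by running through {0, 1/2, 1}.  The
   relevant identities say that J2 is idempotent with a Boolean image, that
   a = (a /\ ~a) \/ J2 a with J2 (a /\ ~a) = 0, and that a |-> a /\ ~a is a
   homomorphism onto D(A) (with ~ read as the identity and 1 as 0 there); its
   kernel is the congruence of part (4). *)

From Stdlib Require Import FunctionalExtensionality ProofIrrelevance ClassicalEpsilon.

Set Implicit Arguments.

(* Variables range over an arbitrary type, so that the elements of an algebra
   can serve as the variables of an identity about them (see [wk_identity]). *)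
Inductive term (X : Type) : Type :=
  | Var (x : X)
  | Zero | One
  | Meet (s t : term X) | Join (s t : term X)
  | Neg (t : term X) | J2 (t : term X).

Arguments Zero {X}.
Arguments One {X}.

Fixpoint eval (A : alg) (X : Type) (v : X -> A) (t : term X) : A :=
  match t with
  | Var x => v x
  | Zero => zero A
  | One => one A
  | Meet s t => meet A (eval A v s) (eval A v t)
  | Join s t => join A (eval A v s) (eval A v t)
  | Neg t => neg A (eval A v t)
  | J2 t => j2 A (eval A v t)
  end.

Definition satisfies (A : alg) (X : Type) (s t : term X) : Prop :=
  forall v : X -> A, eval A v s = eval A v t.

Lemma eval_power (I X : Type) (v : X -> power I) (t : term X) (i : I) :
  eval (power I) v t i = eval WKe (fun x => v x i) t.
Proof. induction t; simpl; congruence. Qed.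

Lemma satisfies_power (I X : Type) (s t : term X) :
  satisfies WKe s t -> satisfies (power I) s t.
Proof.
  intros Hst v; apply functional_extensionality; intros i.
  rewrite !eval_power; apply Hst.
Qed.

Lemma subuniverse_eval (A : alg) (S : A -> Prop) (X : Type) (v : X -> A) (t : term X) :
  subuniverse A S -> (forall x, S (v x)) -> S (eval A v t).
Proof. intros (S0 & S1 & Sm & Sj & Sn & SJ) Sv; induction t; simpl; auto. Qed.

Lemma hom_on_eval (A B : alg) (S : A -> Prop) (h : A -> B) (X : Type) (v : X -> A)
    (t : term X) :
  subuniverse A S -> hom_on A B S h -> (forall x, S (v x)) ->
  h (eval A v t) = eval B (fun x => h (v x)) t.
Proof.
  intros HS (h0 & h1 & hm & hj & hn & hJ) Sv.
  induction t; simpl;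
    rewrite ?h0, ?h1, ?hm, ?hj, ?hn, ?hJ by (apply subuniverse_eval; auto);
    congruence.
Qed.

Lemma in_V_satisfies (A : alg) (X : Type) (s t : term X) :
  in_V A -> satisfies WKe s t -> satisfies A s t.
Proof.
  intros (I & S & h & HS & Hh & Hsurj) Hst v.
  assert (Hw : exists w : X -> power I, forall x, S (w x) /\ h (w x) = v x).
  { exists (fun x => proj1_sig (constructive_indefinite_description _ (Hsurj (v x)))).
    intros x; exact (proj2_sig (constructive_indefinite_description _ (Hsurj (v x)))). }
  destruct Hw as [w Hw].
  assert (Sw : forall x, S (w x)) by apply Hw.
  replace v with (fun x => h (w x)) by (apply functional_extensionality, Hw).
  rewrite <- (hom_on_eval _ s HS Hh Sw), <- (hom_on_eval _ t HS Hh Sw).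
  rewrite (satisfies_power Hst); reflexivity.
Qed.

Lemma in_V_hom_image (A B : alg) (f : A -> B) :
  in_V A -> is_hom A B f -> (forall b, exists a, f a = b) -> in_V B.
Proof.
  intros (I & S & h & HS & Hh & Hsurj) Hf fsurj.
  destruct Hh as (h0 & h1 & hm & hj & hn & hJ).
  destruct Hf as (f0 & f1 & fm & fj & fn & fJ).
  exists I, S, (fun x => f (h x)); split; [exact HS | split].
  - repeat split; intros;
      rewrite ?h0, ?h1, ?hm, ?hj, ?hn, ?hJ by assumption; auto.
  - intros b; destruct (fsurj b) as [a <-]; destruct (Hsurj a) as [x [Sx <-]].
    exists x; auto.
Qed.

Lemma kernel_congruence (A B : alg) (f : A -> B) :
  is_hom A B f -> congruence A (fun x y => f x = f y).
Proof.
  intros (_ & _ & fm & fj & fn & fJ).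
  repeat split; intros; try congruence;
    rewrite ?fm, ?fj, ?fn, ?fJ by exact I; congruence.
Qed.

Lemma iso_to_quotient_kernel (A B : alg) (f : A -> B) :
  is_hom A B f -> (forall b, exists a, f a = b) ->
  iso_to_quotient A B (fun x y => f x = f y).
Proof. intros Hf fsurj; exists f; split; [exact Hf | split; [exact fsurj | tauto]]. Qed.

Ltac reify A t :=
  lazymatch t with
  | zero A => constr:(@Zero (car A))
  | one A => constr:(@One (car A))
  | meet A ?x ?y =>
      let s := reify A x in let u := reify A y in constr:(Meet s u)
  | join A ?x ?y =>
      let s := reify A x in let u := reify A y in constr:(Join s u)
  | neg A ?x => let s := reify A x in constr:(Neg s)
  | j2 A ?x => let s := reify A x in constr:(J2 s)
  | ?a => constr:(@Var (car A) a)
  end.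

(* Proves an equation in an algebra in V(BCA), given a proof [HA] of
   membership, by checking it in WK^e under every valuation. *)
Ltac wk_identity HA :=
  lazymatch goal with
  | |- @eq (car ?A) ?l ?r =>
      let s := reify A l in
      let t := reify A r in
      change (eval A (fun a => a) s = eval A (fun a => a) t);
      apply (in_V_satisfies HA); intros v; simpl;
      repeat match goal with |- context [v ?a] => destruct (v a) end;
      reflexivity
  end.

Section VarietyBCA.

Variable A : alg.
Hypothesis HA : in_V A.

Definition defect (a : A) : A := meet A a (neg A a).

Lemma j2_idem (a : A) : j2 A (j2 A a) = j2 A a.
Proof. wk_identity HA. Qed.

Lemma j2_defect (a : A) : j2 A (defect a) = zero A.
Proof. unfold defect; wk_identity HA. Qed.

Lemma defect_join_j2 (a : A) : join A (defect a) (j2 A a) = a.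
Proof. unfold defect; wk_identity HA. Qed.

Lemma join_zero (a : A) : join A a (zero A) = a.
Proof. wk_identity HA. Qed.

Lemma j2_zero : j2 A (zero A) = zero A.
Proof. wk_identity HA. Qed.

Lemma Oset_iff_j2 (a : A) : Oset A a <-> exists b, a = j2 A b.
Proof.
  split.
  - intros Ha; exists a; symmetry; exact Ha.
  - intros [b ->]; apply j2_idem.
Qed.

Lemma Dset_defect_id (a : A) : Dset A a -> defect a = a.
Proof.
  intros Ha.
  rewrite <- (defect_join_j2 a) at 2.
  rewrite Ha; symmetry; apply join_zero.
Qed.

Lemma Dset_iff_defect (a : A) : Dset A a <-> exists b, a = defect b.
Proof.
  split.
  - intros Ha; exists a; symmetry; apply Dset_defect_id, Ha.
  - intros [b ->]; apply j2_defect.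
Qed.

Lemma subuniverse_Oset : subuniverse A (Oset A).
Proof.
  unfold Oset; repeat split.
  - apply j2_zero.
  - wk_identity HA.
  - intros x y Hx Hy; rewrite <- Hx, <- Hy; wk_identity HA.
  - intros x y Hx Hy; rewrite <- Hx, <- Hy; wk_identity HA.
  - intros x Hx; rewrite <- Hx; wk_identity HA.
  - intros x Hx; rewrite Hx; exact Hx.
Qed.

Lemma Oset_boolean (x y z : A) : Oset A x -> Oset A y -> Oset A z ->
  meet A x y = meet A y x /\ join A x y = join A y x /\
  meet A x (meet A y z) = meet A (meet A x y) z /\
  join A x (join A y z) = join A (join A x y) z /\
  meet A x (join A x y) = x /\ join A x (meet A x y) = x /\
  meet A x (join A y z) = join A (meet A x y) (meet A x z) /\
  join A x (meet A y z) = meet A (join A x y) (join A x z) /\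
  join A x (zero A) = x /\ meet A x (one A) = x /\
  meet A x (neg A x) = zero A /\ join A x (neg A x) = one A.
Proof.
  unfold Oset; intros Hx Hy Hz; rewrite <- Hx, <- Hy, <- Hz.
  repeat split; wk_identity HA.
Qed.

Lemma O_alg_boolean (HO : subuniverse A (Oset A)) : boolean_reduct (O_alg A HO).
Proof.
  destruct HO as (h0 & h1 & hm & hj & hn & hJ); simpl.
  intros [x px] [y py] [z pz]; simpl.
  pose proof (Oset_boolean px py pz).
  repeat split; apply subset_eq_compat; intuition.
Qed.

Lemma defect_zero : defect (zero A) = zero A.
Proof. unfold defect; wk_identity HA. Qed.

Lemma defect_one : defect (one A) = zero A.
Proof. unfold defect; wk_identity HA. Qed.

Lemma defect_meet (x y : A) : defect (meet A x y) = meet A (defect x) (defect y).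
Proof. unfold defect; wk_identity HA. Qed.

Lemma defect_join (x y : A) : defect (join A x y) = join A (defect x) (defect y).
Proof. unfold defect; wk_identity HA. Qed.

Lemma defect_neg (x : A) : defect (neg A x) = defect x.
Proof. unfold defect; wk_identity HA. Qed.

Lemma defect_j2 (x : A) : defect (j2 A x) = j2 A (defect x).
Proof. unfold defect; wk_identity HA. Qed.

Lemma D_closed_in_V : D_closed A.
Proof.
  repeat split.
  - apply j2_zero.
  - intros x y Hx Hy; apply Dset_iff_defect; exists (meet A x y).
    rewrite defect_meet, !Dset_defect_id by assumption; reflexivity.
  - intros x y Hx Hy; apply Dset_iff_defect; exists (join A x y).
    rewrite defect_join, !Dset_defect_id by assumption; reflexivity.
  - intros x Hx; unfold Dset in *; rewrite Hx; apply j2_zero.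
Qed.

Lemma D_alg_neg (HD : D_closed A) (x : D_alg A HD) : neg (D_alg A HD) x = x.
Proof. destruct HD as (h0 & hm & hj & hJ); reflexivity. Qed.

Lemma defect_onto_D_alg (HD : D_closed A) :
  exists f : A -> D_alg A HD, is_hom A (D_alg A HD) f /\ forall b, exists a, f a = b.
Proof.
  destruct HD as (h0 & hm & hj & hJ); simpl.
  exists (fun a => exist _ (defect a) (j2_defect a)); split.
  - repeat split; intros; apply subset_eq_compat;
      auto using defect_zero, defect_one, defect_meet, defect_join, defect_neg,
        defect_j2.
  - intros [b Hb]; exists b; apply subset_eq_compat, Dset_defect_id, Hb.
Qed.

End VarietyBCA.

Theorem lemma4p12 (A : alg) (HA : in_V A) :
  (forall a : A, Oset A a <-> exists b : A, a = j2 A b) /\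
  (forall a : A, Dset A a <-> exists b : A, a = meet A b (neg A b)) /\
  (exists HO : subuniverse A (Oset A), boolean_reduct (O_alg A HO)) /\
  (exists HD : D_closed A,
     is_semilattice (D_alg A HD) /\
     exists th : A -> A -> Prop,
       congruence A th /\ iso_to_quotient A (D_alg A HD) th).
Proof.
  split; [|split; [|split]].
  - exact (Oset_iff_j2 HA).
  - exact (Dset_iff_defect HA).
  - exists (subuniverse_Oset HA); apply (O_alg_boolean HA).
  - exists (D_closed_in_V HA).
    destruct (defect_onto_D_alg HA (D_closed_in_V HA)) as (f & Hf & fsurj).
    split.
    + split; [exact (in_V_hom_image HA Hf fsurj) | apply D_alg_neg].
    + exists (fun x y => f x = f y); split.
      * exact (kernel_congruence Hf).
      * exact (iso_to_quotient_kernel Hf fsurj).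
Qed.
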